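(* Let $\pi$ be a distribution on $\mathbb{R}^d$ with positive definite covariance $\Sigma$, precision $Q=\Sigma^{-1}=(Q_{ij})_{i,j=1}^s$ in block form. For $w\in\Delta_s:=\{w\in\mathbb{R}^s: w_i>0,\ 1-w_1-\dots-w_s>0\}$ define $$f(w)=\lambda_{\min}(D^{\rm ext}_wQ^{\rm ext}),\quad Q^{\rm ext}=\mathrm{diag}(Q,1),\quad D^{\rm ext}_w=\mathrm{diag}\Big(D_w,\ 1-\sum_{i=1}^sw_i\Big),$$ where $D_w=\mathrm{diag}(w_1(Q_{11})^{-1},\dots,w_s(Q_{ss})^{-1})$. Let $w^\star\in\Delta_s$ be a maximiser of $f$ over $\Delta_s$. Then the pseudo-optimal weights are $p^{\mathrm{opt}}_j=w^\star_j/(w^\star_1+\dots+w^\star_s)$, $j=1,\dots,s$, and $$\mathrm{PG}(p^{\mathrm{opt}})=\frac{f(w^\star)}{w^\star_1+\dots+w^\star_s}.$$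
   Context: For a probability vector $p$ with positive entries, the pseudo-spectral gap is $\mathrm{PG}(p)=\lambda_{\min}(D_pQ)$ with $D_p=\mathrm{diag}(p_1(Q_{11})^{-1},\dots,p_s(Q_{ss})^{-1})$ (block diagonal, $d\times d$), and the pseudo-optimal weights $p^{\mathrm{opt}}$ are the (unique) maximiser of $\mathrm{PG}$ over probability vectors with positive entries. $\lambda_{\min}$ denotes the smallest eigenvalue. *)

From HB Require Import structures.
From mathcomp Require Import all_boot all_order all_algebra.
From mathcomp Require Import classical_sets reals.
Set Implicit Arguments. Unset Strict Implicit. Unset Printing Implicit Defensive.
Import Order.TTheory GRing.Theory Num.Theory.
Local Open Scope ring_scope.
Local Open Scope classical_set_scope.

(* Smallest (real) eigenvalue of a square real matrix.  For the matrices
   used below (D Q with D, Q positive definite) all eigenvalues are real,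
   so this is the smallest eigenvalue. *)
Definition lambda_min (R : realType) (m : nat) (A : 'M[R]_m) : R :=
  inf [set a : R | eigenvalue A a].

Definition posdef (R : realType) (m : nat) (A : 'M[R]_m) : Prop :=
  A^T = A /\ forall x : 'rV[R]_m, x != 0 -> 0 < (x *m A *m x^T) 0 0.

Definition Dblock (R : realType) (s : nat) (n : 'I_s -> nat)
  (Q : 'M[R]_(\sum_(i < s) n i)) (p : 'I_s -> R) : 'M[R]_(\sum_(i < s) n i) :=
  \mxdiag_(i < s) (p i *: invmx (submxblock Q i i)).

Definition PG (R : realType) (s : nat) (n : 'I_s -> nat)
  (Q : 'M[R]_(\sum_(i < s) n i)) (p : 'I_s -> R) : R :=
  lambda_min (Dblock Q p *m Q).

Definition posprob (R : realType) (s : nat) (p : 'I_s -> R) : Prop :=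
  (forall i, 0 < p i) /\ \sum_(i < s) p i = 1.

Definition Delta (R : realType) (s : nat) (w : 'I_s -> R) : Prop :=
  (forall i, 0 < w i) /\ 0 < 1 - \sum_(i < s) w i.

Definition fext (R : realType) (s : nat) (n : 'I_s -> nat)
  (Q : 'M[R]_(\sum_(i < s) n i)) (w : 'I_s -> R) : R :=
  lambda_min (block_mx (Dblock Q w) 0 0 (1 - \sum_(i < s) w i)%:M
              *m block_mx Q 0 0 (1%:M : 'M[R]_1)).

(* For w in Delta_s put t = w_1 + ... + w_s and p = w / t.  Then D_w = t D_p,
   so D^ext_w Q^ext is block diagonal with blocks t D_p Q and 1 - t, whence
   f(w) = min (t PG(p), 1 - t).  For fixed p this is largest at
   t = 1 / (1 + PG(p)), where it equals PG(p) / (1 + PG(p)), an increasing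
   function of PG(p).  Hence a maximiser wstar of f, with sum tstar, has
   wstar / tstar maximising PG, i.e. wstar / tstar = p^opt, and
   f(wstar) = tstar PG(p^opt).  The minimum defining PG is over a nonempty
   set: Q D_p is self-adjoint for the scalar product defined by Q, so its
   complex eigenvalues are real. *)

From HB Require Import structures.
From mathcomp Require Import all_boot all_order all_algebra.
From mathcomp Require Import boolp classical_sets reals.
From mathcomp Require Import complex polyrcf.
From mathcomp Require Import lra.
Set Implicit Arguments.
Unset Strict Implicit.
Unset Printing Implicit Defensive.

Import Order.TTheory GRing.Theory Num.Theory.
Local Open Scope ring_scope.
Local Open Scope classical_set_scope.

Section RealEigenvalue.
Variable R : rcfType.
Local Notation Re := (@complex.Re R).
Local Notation Im := (@complex.Im R).
Local Notation cpx := (map_mx (real_complex R)).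

Lemma map_Re_mulmx m n p (v : 'M[R[i]]_(m, n)) (M : 'M[R]_(n, p)) :
  map_mx Re (v *m cpx M) = map_mx Re v *m M.
Proof.
apply/matrixP => i j; rewrite !mxE raddf_sum; apply: eq_bigr => k _.
by rewrite !mxE; case: (v i k) => a b /=; rewrite mulr0 subr0.
Qed.

Lemma map_Im_mulmx m n p (v : 'M[R[i]]_(m, n)) (M : 'M[R]_(n, p)) :
  map_mx Im (v *m cpx M) = map_mx Im v *m M.
Proof.
apply/matrixP => i j; rewrite !mxE raddf_sum; apply: eq_bigr => k _.
by rewrite !mxE; case: (v i k) => a b /=; rewrite mulr0 add0r.
Qed.

Lemma map_Re_scale m n (l : R[i]) (v : 'M[R[i]]_(m, n)) :
  map_mx Re (l *: v) = Re l *: map_mx Re v - Im l *: map_mx Im v.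
Proof. by apply/matrixP => i j; rewrite !mxE; case: l (v i j) => ? ? [? ?]. Qed.

Lemma map_Im_scale m n (l : R[i]) (v : 'M[R[i]]_(m, n)) :
  map_mx Im (l *: v) = Im l *: map_mx Re v + Re l *: map_mx Im v.
Proof.
by apply/matrixP => i j; rewrite !mxE; case: l (v i j) => ? ? [? ?] /=; rewrite addrC.
Qed.

Variables (N : nat) (Q M : 'M[R]_N).
Hypothesis QT : Q^T = Q.
Hypothesis Qpos : forall x : 'rV[R]_N, x != 0 -> 0 < (x *m Q *m x^T) 0 0.
Hypothesis MQT : (M *m Q)^T = M *m Q.

Let form (x y : 'rV[R]_N) : R := (x *m Q *m y^T) 0 0.

Let form_sym x y : form x y = form y x.
Proof.
rewrite /form; have -> : y *m Q *m x^T = (x *m Q *m y^T)^T.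
  by rewrite !trmx_mul trmxK QT mulmxA.
by rewrite [RHS]mxE.
Qed.

Let form_adjoint x y : form (x *m M) y = form x (y *m M).
Proof.
have QMT : Q *m M^T = M *m Q by rewrite -MQT trmx_mul QT.
by rewrite /form trmx_mul mulmxA -(mulmxA x Q) QMT mulmxA.
Qed.

Let form_ge0 x : 0 <= form x x.
Proof. by have [->|/Qpos/ltW//] := eqVneq x 0; rewrite /form !mul0mx mxE. Qed.

Lemma selfadjoint_eigenvalue_real (v : 'rV[R[i]]_N) (l : R[i]) :
  v != 0 -> v *m cpx M = l *: v -> Im l = 0.
Proof.
move=> v0 vM; set a := map_mx Re v; set b := map_mx Im v.
have aM : a *m M = Re l *: a - Im l *: b by rewrite -map_Re_mulmx vM map_Re_scale.
have bM : b *m M = Im l *: a + Re l *: b by rewrite -map_Im_mulmx vM map_Im_scale.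
have ab0 : (a != 0) || (b != 0).
  apply: contraNT v0; rewrite negb_or !negbK => /andP[/eqP a0 /eqP b0].
  apply/eqP/matrixP => i j; move/matrixP/(_ i j): a0; move/matrixP/(_ i j): b0.
  by rewrite !mxE; case: (v i j) => ? ? /= -> ->.
have norm_gt0 : 0 < form a a + form b b.
  case/orP: ab0 => /Qpos pos.
    exact: ltr_pwDl pos (form_ge0 b).
  exact: ltr_pwDr pos (form_ge0 a).
have := form_adjoint a b; rewrite aM bM /form linearD /= !linearZ /=.
rewrite scalerN !mulmxDl mulmxDr !mulNmx -!scalemxAl -!scalemxAr.
rewrite ![(_ + _ : 'M_1) _ _]mxE ![(- _ : 'M_1) _ _]mxE ![(_ *: _ : 'M_1) _ _]mxE.
rewrite -/(form a b) -/(form b b) -/(form a a) => E.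
have : Im l * (form a a + form b b) = 0 by lra.
by move/eqP; rewrite mulf_eq0 (gt_eqF norm_gt0) orbF => /eqP.
Qed.

Lemma selfadjoint_has_eigenvalue : (0 < N)%N -> exists a, eigenvalue M a.
Proof.
move=> N0; have [l /eigenvalueP[v vM v0]] := eigenvalue_closed (cpx M) N0.
have lE : l = real_complex R (Re l).
  by move: (selfadjoint_eigenvalue_real v0 vM); case: l {vM} => ? ? /= ->.
exists (Re l); rewrite -(eigenvalue_map (real_complex R)).
by apply/eigenvalueP; exists v; rewrite // vM {1}lE.
Qed.

End RealEigenvalue.

Lemma scale_mxdiag (R : pzRingType) s (p_ : 'I_s -> nat) (t : R)
    (B : forall i, 'M[R]_(p_ i)) :
  t *: \mxdiag_i B i = \mxdiag_i (t *: B i).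
Proof.
have scaleE m k (X : 'M[R]_(m, k)) : t *: X = map_mx ( *%R t) X.
  by apply/matrixP => i j; rewrite !mxE.
apply/matrixP => x y; rewrite scaleE /mxdiag /mxblock !mxE.
case: eqP => _; last by rewrite mxE mulr0.
have zeroE : 0 = map_mx ( *%R t)
                  (0 : 'M[R]_(p_ (tagnat.sig1 x), p_ (tagnat.sig1 y))).
  by apply/matrixP => i j; rewrite !mxE mulr0.
by rewrite [in RHS]zeroE scaleE -map_conform_mx mxE.
Qed.

Section EigenvalueField.
Variable F : fieldType.

Lemma eigenvalue_det n (A : 'M[F]_n) a :
  eigenvalue A a = (\det (A - a%:M) == 0).
Proof.
by rewrite /eigenvalue /eigenspace kermx_eq0 row_free_unit unitmxE unitfE negbK.
Qed.

Lemma eigenvalue_tr n (A : 'M[F]_n) a : eigenvalue A^T a = eigenvalue A a.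
Proof. by rewrite !eigenvalue_det -det_tr linearB /= tr_scalar_mx trmxK. Qed.

Lemma eigenvalue_scale n (A : 'M[F]_n) t a : t != 0 ->
  eigenvalue (t *: A) a = eigenvalue A (a / t).
Proof.
move=> t0; rewrite !eigenvalue_det.
have -> : t *: A - a%:M = t *: (A - (a / t)%:M).
  by rewrite scalerBr scale_scalar_mx mulrC mulfVK.
by rewrite detZ mulf_eq0 expf_eq0 (negbTE t0) andbF.
Qed.

Lemma eigenvalue_block_scalar n (A : 'M[F]_n) c a :
  eigenvalue (block_mx A 0 0 (c%:M : 'M_1)) a = eigenvalue A a || (a == c).
Proof.
rewrite !eigenvalue_det [a%:M](@scalar_mx_block _ n 1) opp_block_mx add_block_mx.
rewrite !oppr0 !addr0 det_ublock mulf_eq0 -(@raddfB _ _ (@scalar_mx _ 1)).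
by rewrite det_scalar1 subr_eq0 [c == a]eq_sym.
Qed.

End EigenvalueField.

Section LambdaMin.
Variable R : realType.

Lemma has_lbound_eigenvalue n (A : 'M[R]_n) :
  has_lbound [set a | eigenvalue A a].
Proof.
exists (- cauchy_bound (char_poly A)) => a /=.
rewrite eigenvalue_root_char => /eqP ra.
have /ltW := cauchy_boundP (monic_neq0 (char_poly_monic A)) ra.
by rewrite ler_norml => /andP[].
Qed.

Lemma inf_scale_setU1 (E : set R) t c : E !=set0 -> has_lbound E -> 0 < t ->
  inf ([set t * e | e in E] `|` [set c]) = Num.min (t * inf E) c.
Proof.
move=> E0 lbE t0; set S := _ `|` _.
have Sc : S c by right.
have lbS : lbound S (Num.min (t * inf E) c).
  move=> _ [[e Ee <-]|->]; rewrite ge_min ?lexx ?orbT //.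
  by rewrite ler_pM2l // (ge_inf lbE Ee).
have hS : has_lbound S by exists (Num.min (t * inf E) c).
apply/le_anti/andP; split; last by apply: lb_le_inf => //; exists c.
rewrite le_min (ge_inf hS Sc) andbT -ler_pdivrMl //; apply: lb_le_inf => // e Ee.
by rewrite ler_pdivrMl //; apply: (ge_inf hS); left; exists e.
Qed.

Lemma lambda_min_block_scale n (A : 'M[R]_n) t c :
  (exists a, eigenvalue A a) -> 0 < t ->
  lambda_min (block_mx (t *: A) 0 0 (c%:M : 'M_1)) =
  Num.min (t * lambda_min A) c.
Proof.
move=> [a Aa] t0; have tN0 : t != 0 by rewrite gt_eqF.
rewrite /lambda_min -inf_scale_setU1 //; last exact: has_lbound_eigenvalue.
  congr inf; apply/seteqP; split => x /=.
    rewrite eigenvalue_block_scalar eigenvalue_scale //.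
    case/orP => [Ax|/eqP ->]; last by right.
    by left; exists (x / t); rewrite // mulrC divfK.
  case=> [[e Ae <-]|->]; rewrite eigenvalue_block_scalar ?eqxx ?orbT //.
  by rewrite eigenvalue_scale // mulrC mulKf // Ae.
by exists a.
Qed.

End LambdaMin.

Section PseudoGap.
Variables (R : realType) (s : nat) (n : 'I_s -> nat).
Variable Q : 'M[R]_(\sum_(i < s) n i).

Lemma Dblock_tr p : Q^T = Q -> (Dblock Q p)^T = Dblock Q p.
Proof.
move=> QT; rewrite /Dblock tr_mxdiag; apply: eq_mxdiag => i.
by rewrite linearZ /= trmx_inv tr_submxblock QT.
Qed.

Lemma Dblock_scale t p : Dblock Q (fun i => t * p i) = t *: Dblock Q p.
Proof. by rewrite /Dblock scale_mxdiag; apply: eq_mxdiag => i; rewrite scalerA. Qed.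

Hypotheses (Q_pd : posdef Q) (N_gt0 : (0 < \sum_(i < s) n i)%N).

Lemma Dblock_mul_has_eigenvalue p : exists a, eigenvalue (Dblock Q p *m Q) a.
Proof.
have [QT Qpos] := Q_pd.
have QDQ_sym : (Q *m Dblock Q p *m Q)^T = Q *m Dblock Q p *m Q.
  by rewrite !trmx_mul QT Dblock_tr // mulmxA.
have [a QDa] := selfadjoint_has_eigenvalue QT Qpos QDQ_sym N_gt0.
by exists a; rewrite -eigenvalue_tr trmx_mul QT Dblock_tr.
Qed.

Lemma fext_PG w : 0 < \sum_i w i ->
  fext Q w = Num.min ((\sum_i w i) * PG Q (fun i => w i / \sum_i w i))
                     (1 - \sum_i w i).
Proof.
rewrite /fext; set t := \sum_i w i => t0.
have -> : Dblock Q w = t *: Dblock Q (fun i => w i / t).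
  rewrite -Dblock_scale; congr Dblock.
  by apply: funext => i; rewrite mulrC divfK ?gt_eqF.
rewrite mulmx_block !mulmx0 !mul0mx !addr0 add0r mulmx1 -scalemxAl.
by rewrite lambda_min_block_scale //; apply: Dblock_mul_has_eigenvalue.
Qed.

Lemma fext_scale_posprob p u : posprob p -> 0 < u ->
  fext Q (fun i => u * p i) = Num.min (u * PG Q p) (1 - u).
Proof.
move=> [_ p1] u0; have uE : \sum_i u * p i = u by rewrite -mulr_sumr p1 mulr1.
have pE : (fun i => u * p i / u) = p.
  by apply: funext => i; rewrite mulrC mulKf ?gt_eqF.
by rewrite fext_PG uE ?pE.
Qed.

End PseudoGap.

Lemma min_linear_max_eq (R : realFieldType) (m M t : R) :
  0 < t -> t < 1 -> m <= M ->
  (forall u, 0 < u -> u < 1 ->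
     Num.min (u * M) (1 - u) <= Num.min (t * m) (1 - t)) ->
  m = M /\ Num.min (t * m) (1 - t) = t * M.
Proof.
move=> t0 t1 mM opt.
have [M_gt0|M_le0] := ltP 0 M.
  (* u M = 1 - u: the maximiser of u |-> min (u M) (1 - u). *)
  pose u := (1 + M)^-1.
  have M1_gt0 : 0 < 1 + M by rewrite addr_gt0.
  have u0 : 0 < u by rewrite invr_gt0.
  have uM : u * M = 1 - u.
    by have := mulVf (lt0r_neq0 M1_gt0); rewrite -/u mulrDr mulr1; lra.
  have u1 : u < 1 by have := mulr_gt0 u0 M_gt0; lra.
  have := opt u u0 u1; rewrite uM minxx le_min => /andP[um ut].
  have tM : t * M <= u * M by rewrite ler_pM2r //; lra.
  have tmM : t * m <= t * M by rewrite ler_pM2l.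
  have mE : m = M by apply: (mulfI (lt0r_neq0 t0)); lra.
  by split => //; rewrite mE min_l //; lra.
have t2_0 : 0 < t / 2 by lra.
have tM_le0 : t / 2 * M <= 0 by rewrite pmulr_rle0.
have := opt (t / 2) t2_0 ltac:(lra); rewrite min_l; last by lra.
rewrite le_min => /andP[tm _].
have tmM : t * m <= t * M by rewrite ler_pM2l.
have M0 : M = 0.
  apply/le_anti; rewrite M_le0 -(pmulr_rge0 _ t2_0); lra.
have mE : m = M.
  apply/le_anti; rewrite mM M0 -(pmulr_rge0 _ t0).
  by apply: le_trans tm; rewrite M0 mulr0.
by split => //; rewrite mE M0 mulr0 min_l //; lra.
Qed.

Section Simplex.
Variables (R : realType) (s : nat).

Lemma posprob_dim_gt0 (p : 'I_s -> R) : posprob p -> (0 < s)%N.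
Proof.
case=> _; case: s p => // p; rewrite big_ord0 => /eqP.
by rewrite eq_sym oner_eq0.
Qed.

Lemma Delta_scale_posprob (p : 'I_s -> R) u : posprob p -> 0 < u -> u < 1 ->
  Delta (fun i => u * p i).
Proof.
move=> [p_gt0 p1] u0 u1; split => [i|]; first by rewrite mulr_gt0.
by rewrite -mulr_sumr p1 mulr1 subr_gt0.
Qed.

Hypothesis s_gt0 : (0 < s)%N.

Lemma Delta_sum_gt0 (w : 'I_s -> R) : Delta w -> 0 < \sum_i w i.
Proof.
move=> [w_gt0 _]; rewrite (bigD1 (Ordinal s_gt0)) //=.
by rewrite ltr_pwDl // sumr_ge0 // => i _; apply/ltW.
Qed.

Lemma posprob_normalize (w : 'I_s -> R) : Delta w ->
  posprob (fun i => w i / \sum_j w j).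
Proof.
move=> wD; have t0 := Delta_sum_gt0 wD; have [w_gt0 _] := wD.
by split => [i|]; [rewrite divr_gt0 | rewrite -mulr_suml divff ?gt_eqF].
Qed.

End Simplex.

Theorem proposition2 (R : realType) (s : nat) (n : 'I_s -> nat)
  (Q : 'M[R]_(\sum_(i < s) n i))
  (n_pos : forall i, (0 < n i)%N)
  (Q_pd : posdef Q)
  (popt : 'I_s -> R)
  (popt_prob : posprob popt)
  (popt_max : forall p, posprob p -> PG Q p <= PG Q popt)
  (popt_uniq : forall q, posprob q ->
     (forall p, posprob p -> PG Q p <= PG Q q) -> q = popt)
  (wstar : 'I_s -> R)
  (wstar_in : Delta wstar)
  (wstar_max : forall w, Delta w -> fext Q w <= fext Q wstar) :
  (forall j, popt j = wstar j / \sum_(i < s) wstar i) /\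
  PG Q popt = fext Q wstar / \sum_(i < s) wstar i.
Proof.
have s_gt0 := posprob_dim_gt0 popt_prob.
have N_gt0 : (0 < \sum_i n i)%N by rewrite (bigD1 (Ordinal s_gt0)) //= ltn_addr.
have t_gt0 := Delta_sum_gt0 s_gt0 wstar_in.
have t_lt1 : \sum_i wstar i < 1 by have [_] := wstar_in; rewrite subr_gt0.
have pstar_prob := posprob_normalize s_gt0 wstar_in.
have fstar := fext_PG Q_pd N_gt0 t_gt0.
have popt_dominated u : 0 < u -> u < 1 ->
    Num.min (u * PG Q popt) (1 - u) <= fext Q wstar.
  move=> u0 u1; rewrite -(fext_scale_posprob Q_pd N_gt0 popt_prob u0).
  exact/wstar_max/Delta_scale_posprob.
rewrite fstar in popt_dominated.
have [PG_eq fext_eq] :=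
  min_linear_max_eq t_gt0 t_lt1 (popt_max _ pstar_prob) popt_dominated.
have pstarE : (fun i => wstar i / \sum_j wstar j) = popt.
  by apply: popt_uniq; [exact: pstar_prob | move=> p /popt_max; rewrite PG_eq].
split => [j|]; first by rewrite -pstarE.
by rewrite fstar fext_eq mulrC; apply/esym/mulKf/lt0r_neq0.
Qed.
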